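(* Let $\mu$ be a signed Borel measure on $\mathbb{R}^d$, let $A_+,A_-$ be the sets of its Hahn decomposition and $\mu_+,\mu_-$ its positive and negative parts. For $\varepsilon>0$ and $N\in\mathbb{N}$ let $$P^{(N)}_{+,\varepsilon}=\Big\{x\in A_+ : \mu_-(B_r(x))\leq\varepsilon\,\mu_+(B_r(x))\ \text{for all } r<\tfrac1N\Big\}.$$ Let $x\in P^{(N)}_{+,\varepsilon}$ and $r<\frac1N$. Let $\varphi$ be a radial non-negative function supported in the unit ball that decreases as the radius grows, and let $\psi$ be a function with $\varphi\leq\psi\leq\frac{1}{2\varepsilon}\varphi$. Then $$\int\psi\Big(\frac{y-x}{r}\Big)\,d\mu_+(y)\leq 2\int\psi\Big(\frac{y-x}{r}\Big)\,d\mu(y).$$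
   Context: $B_r(x)$ is the open ball of radius $r$ centered at $x$. *)

From HB Require Import structures.
From mathcomp Require Import all_boot all_order all_algebra.
From mathcomp Require Import all_classical all_reals all_analysis.
Set Implicit Arguments.
Unset Strict Implicit.
Unset Printing Implicit Defensive.
Import Order.TTheory GRing.Theory Num.Theory.
Import numFieldNormedType.Exports.
Local Open Scope ring_scope.
Local Open Scope classical_set_scope.

(* R^d as row vectors, equipped with its Borel sigma-algebra
   (the sigma-algebra generated by the open sets). *)
Definition Rd (R : realType) (d : nat) := g_sigma_algebraType (@open 'rV[R]_d).

Definition enorm (R : realType) (d : nat) (v : 'rV[R]_d) : R :=
  Num.sqrt (\sum_(i < d) v ord0 i ^+ 2).

Definition eball (R : realType) (d : nat) (x : Rd R d) (r : R) : set (Rd R d) :=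
  [set y | enorm (y - x) < r].

Definition Pset (R : realType) (d : nat) (nu : {charge set Rd R d -> \bar R})
  (Ap An : set (Rd R d)) (nuPN : hahn_decomposition nu Ap An)
  (eps : R) (N : nat) : set (Rd R d) :=
  [set x | Ap x /\ forall r : R, r < N%:R^-1 ->
     (jordan_neg nuPN (eball x r) <= eps%:E * jordan_pos nuPN (eball x r))%E].

Definition radial (R : realType) (d : nat) (phi : 'rV[R]_d -> R) :=
  forall y z, enorm y = enorm z -> phi y = phi z.

Definition radially_decreasing (R : realType) (d : nat) (phi : 'rV[R]_d -> R) :=
  forall y z, enorm y <= enorm z -> phi z <= phi y.

Definition supported_in_unit_ball (R : realType) (d : nat) (phi : 'rV[R]_d -> R) :=
  forall y, 1 < enorm y -> phi y = 0.

Definition signed_integral (R : realType) (d : nat) (nu : {charge set Rd R d -> \bar R})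
  (Ap An : set (Rd R d)) (nuPN : hahn_decomposition nu Ap An)
  (f : Rd R d -> \bar R) : \bar R :=
  (\int[jordan_pos nuPN]_y f y - \int[jordan_neg nuPN]_y f y)%E.

From HB Require Import structures.
From mathcomp Require Import all_boot all_order all_algebra.
From mathcomp Require Import all_classical all_reals all_analysis.
From mathcomp Require Import measurable_realfun lra.
Import Order.TTheory GRing.Theory Num.Theory.
Import numFieldNormedType.Exports.
Local Open Scope ring_scope.
Local Open Scope classical_set_scope.

(* The superlevel sets {y | t <= phi ((y - x) / r)}, t > 0, of the rescaled profile are
   open or closed balls centred at x of radius at most r < 1/N, so nu_- <= eps nu_+ on
   each of them (on closed balls by continuity from above of nu_+).  Integrating over
   the levels t -- a layer-cake argument, realised by staircase approximations of the
   profile -- gives int g dnu_- <= eps int g dnu_+ for g = phi ((. - x) / r).  As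
   phi <= psi <= phi / (2 eps), this yields 2 int psi dnu_- <= int psi dnu_+, which is
   the claim because int psi dnu_- is finite. *)

Section measurable_real_functions.
Context {d} {T : measurableType d} {R : realType}.
Implicit Types (f : T -> R) (mu : {measure set T -> \bar R}).

Lemma measurable_fun_superlevel f :
  (forall t, measurable [set y | t <= f y]) -> measurable_fun setT f.
Proof.
move=> mf; apply: (@measurability _ _ _ _ _ _ (@RGenCInfty.G R)).
  exact: RGenCInfty.measurableE.
move=> _ [_ [t ->] <-]; rewrite setTI.
by have := mf t; congr measurable; apply/seteqP; split=> y /=; rewrite in_itv andbT.
Qed.

Lemma measurable_superlevel f t :
  measurable_fun setT f -> measurable [set y | t <= f y].
Proof.
move=> mf; have := mf measurableT _ (measurable_itv `[t, +oo[%O).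
by rewrite setTI; congr measurable; apply/seteqP; split=> y /=; rewrite in_itv andbT.
Qed.

Lemma integral_scaled_sum_indic mu (I : Type) (S : I -> set T) (s : seq I) (c : R) :
  0 <= c -> (forall i, measurable (S i)) ->
  (\int[mu]_y (c * \sum_(i <- s) \1_(S i) y)%:E = c%:E * \sum_(i <- s) mu (S i))%E.
Proof.
move=> c0 mS; under eq_integral => y _ do rewrite EFinM -sumEFin.
rewrite ge0_integralZl//; last 2 first.
- by apply: emeasurable_sum => i; apply/measurable_EFinP/measurable_indic.
- by move=> y _; rewrite sume_ge0// => i _; rewrite lee_fin indicE.
rewrite ge0_integral_sum//; last by move=> i; apply/measurable_EFinP/measurable_indic.
by congr (_ * _)%E; apply: eq_bigr => i _; rewrite integral_indic// setIT.
Qed.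

Lemma bounded_integral_fin_num {mu : {finite_measure set T -> \bar R}} {f} M :
  measurable_fun setT f -> (forall y, 0 <= f y) -> (forall y, f y <= M) ->
  (\int[mu]_y (f y)%:E)%E \is a fin_num.
Proof.
move=> mf f_ge0 f_le; rewrite ge0_fin_numE; last first.
  by apply: integral_ge0 => y _; rewrite lee_fin.
apply: (@le_lt_trans _ _ (\int[mu]_y (cst M%:E) y)%E).
  apply: ge0_le_integral => //; last by move=> y _; rewrite lee_fin.
  - by move=> y _; rewrite lee_fin.
  - exact/measurable_EFinP.
by rewrite integral_cst // ltey_eq fin_numM // fin_num_measure.
Qed.

End measurable_real_functions.

Section superlevel_comparison.
Context {d} {T : measurableType d} {R : realType}.
Context {mu1 : {finite_measure set T -> \bar R}} {mu2 : {measure set T -> \bar R}}.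
Context {f : T -> R} {M c : R}.
Hypotheses (mf : measurable_fun setT f) (f_ge0 : forall y, 0 <= f y)
  (f_le : forall y, f y <= M) (c_ge0 : 0 <= c).
Hypothesis superlevel_le : forall t, 0 < t ->
  (mu1 [set y | (t <= f y)%R] <= c%:E * mu2 [set y | (t <= f y)%R])%E.

Section staircase.
Context {del : R} (del_gt0 : 0 < del).

Let L k := [set y | k%:R * del <= f y].
Let K := (Num.truncn (M / del)).+1.

Lemma sum_indic_superlevel y :
  \sum_(1 <= k < K) \1_(L k) y = (Num.truncn (f y / del))%:R :> R.
Proof.
set j := Num.truncn (f y / del).
have fdel_ge0 : 0 <= f y / del by rewrite divr_ge0 // ltW.
have jK : (j < K)%N by rewrite ltnS le_truncn // ler_pM2r ?invr_gt0.
have Lk k : \1_(L k) y = (k <= j)%N%:R :> R.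
  by rewrite indicE truncn_ge_nat // ler_pdivlMr // mem_setE.
rewrite (big_cat_nat (n := j.+1)) //= [X in X + _](eq_big_nat _ _ (F2 := fun=> 1)).
  rewrite sumr_const_nat subn1 big1_seq ?addr0 // => k /andP[_].
  by rewrite mem_index_iota => /andP[jk _]; rewrite Lk leqNgt jk.
by move=> k /andP[_ kj]; rewrite Lk -ltnS kj.
Qed.

Lemma staircase_le y : del * \sum_(1 <= k < K) \1_(L k) y <= f y.
Proof.
by rewrite sum_indic_superlevel mulrC -ler_pdivlMr // truncn_le divr_ge0 // ltW.
Qed.

Lemma le_staircase y : f y <= del * \sum_(0 <= k < K) \1_(L k) y.
Proof.
rewrite big_ltn // indicE mem_set; last by rewrite /L /= mul0r.
rewrite sum_indic_superlevel addrC natr1 mulrC -ler_pdivrMr //.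
exact/ltW/truncnS_gt.
Qed.

Lemma integral_le_superlevel_approx :
  (\int[mu1]_y (f y)%:E <= c%:E * \int[mu2]_y (f y)%:E + del%:E * mu1 setT)%E.
Proof.
(* Every level L k with k >= 1 is a superlevel set at a positive height, so the
   hypothesis transfers the lower staircase of mu2 to the upper one of mu1; the extra
   level L 0 = setT costs del * mu1 setT. *)
have del_ge0 := ltW del_gt0.
have mL k : measurable (L k) by exact: measurable_superlevel.
have mfE : measurable_fun setT (fun y => (f y)%:E) by exact/measurable_EFinP.
have staircase_measurable (s : seq nat) :
    measurable_fun setT (fun y => (del * \sum_(k <- s) \1_(L k) y)%:E).
  apply/measurable_EFinP/measurable_funM => //.
  by apply: measurable_sum => k; exact: measurable_indic.
have lower : (del%:E * \sum_(1 <= k < K) mu2 (L k) <= \int[mu2]_y (f y)%:E)%E.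
  rewrite -integral_scaled_sum_indic //.
  apply: ge0_le_integral => // y _; last by rewrite lee_fin staircase_le.
  by rewrite lee_fin mulr_ge0 ?sumr_ge0 // => k _; rewrite indicE.
have upper : (\int[mu1]_y (f y)%:E <= del%:E * \sum_(0 <= k < K) mu1 (L k))%E.
  rewrite -integral_scaled_sum_indic //.
  apply: ge0_le_integral => //; last by move=> y _; rewrite lee_fin le_staircase.
  by move=> y _; rewrite lee_fin.
have layers : (\sum_(0 <= k < K) mu1 (L k)
    <= mu1 setT + c%:E * \sum_(1 <= k < K) mu2 (L k))%E.
  rewrite big_ltn // ge0_sume_distrr //; apply: leeD.
    by apply: le_measure; rewrite ?inE.
  rewrite big_nat_cond [leRHS]big_nat_cond; apply: lee_sum => k /andP[/andP[k1 _] _].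
  by apply: superlevel_le; rewrite mulr_gt0 // ltr0n.
apply: (le_trans upper); apply: le_trans (lee_wpmul2l _ layers) _; first by rewrite lee_fin.
rewrite ge0_muleDr ?mule_ge0 ?sume_ge0 // muleCA addeC leeD2r //.
by rewrite lee_wpmul2l ?lee_fin.
Qed.

End staircase.

Lemma integral_le_of_superlevel_le :
  (\int[mu1]_y (f y)%:E <= c%:E * \int[mu2]_y (f y)%:E)%E.
Proof.
apply/lee_addgt0Pr => e e_gt0; set m := fine (mu1 setT).
have m_ge0 : 0 <= m by rewrite fine_ge0.
have mu1E : mu1 setT = m%:E by rewrite fineK ?fin_num_measure.
have del_gt0 : 0 < e / (m + 1) by rewrite divr_gt0 // ltr_wpDl.
apply: le_trans (integral_le_superlevel_approx del_gt0) _.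
rewrite leeD2l // mu1E -EFinM lee_fin mulrAC ler_pdivrMr ?ltr_wpDl //.
by rewrite ler_pM2l // lerDl.
Qed.

End superlevel_comparison.

Lemma lee_twice_sub (R : realDomainType) (x y : \bar R) :
  x \is a fin_num -> (2%:E * x <= y)%E -> (y <= 2%:E * (y - x))%E.
Proof.
move: x y => [x| |] [y| |] //= _; rewrite ?leeNy_eq //.
- by rewrite -EFinB -!EFinM !lee_fin; lra.
- by rewrite mulry gtr0_sg // mul1e.
Qed.

Section euclidean_norm.
Context {R : realType} {d : nat}.
Implicit Types v : 'rV[R]_d.

Lemma enorm_ge0 v : 0 <= enorm v.
Proof. exact: sqrtr_ge0. Qed.

Lemma enormZ (c : R) v : enorm (c *: v) = `|c| * enorm v.
Proof.
rewrite /enorm; under eq_bigr => i _ do rewrite mxE exprMn.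
by rewrite -mulr_sumr sqrtrM ?sqrtr_sqr // sqr_ge0.
Qed.

Lemma enorm0 : enorm (0 : 'rV[R]_d) = 0.
Proof. by rewrite -(scale0r 0) enormZ normr0 mul0r. Qed.

Lemma enorm_continuous : continuous (@enorm R d).
Proof.
have sum_cont : continuous (fun v : 'rV[R]_d => \sum_(i < d) v ord0 i ^+ 2).
  apply: continuous_big => [|i _ w]; first exact: add_continuous.
  have xi := @coord_continuous R 1 d ord0 i w.
  exact: (cvgM xi xi).
move=> v; apply: (@continuous_comp _ _ _ _ (@Num.sqrt R) v (sum_cont v)).
exact: sqrt_continuous.
Qed.

End euclidean_norm.

Definition ecball {R : realType} {d : nat} (x : Rd R d) (r : R) : set (Rd R d) :=
  [set y | enorm (y - x) <= r].

Definition radially_down_closed {R : realType} {d : nat} (x : Rd R d)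
    (S : set (Rd R d)) :=
  forall y z, S y -> enorm (z - x) <= enorm (y - x) -> S z.

Section euclidean_balls.
Context {R : realType} {d : nat}.
Implicit Types (x : Rd R d) (S : set (Rd R d)).

Lemma enormB_continuous x : continuous (fun y : 'rV[R]_d => enorm (y - x)).
Proof.
move=> y; apply: (@continuous_comp _ _ _ (fun y : 'rV[R]_d => y - x) (@enorm R d)).
  exact: (cvgB cvg_id (cvg_cst _)).
exact: enorm_continuous.
Qed.

Lemma eball_measurable x a : measurable (eball x a).
Proof.
apply: sub_sigma_algebra.
have -> : eball x a = (fun y : 'rV[R]_d => enorm (y - x)) @^-1` [set z | z < a] by [].
by apply: open_comp; [move=> y _; exact: enormB_continuous | exact: open_lt].
Qed.

Lemma ecball_measurable x a : measurable (ecball x a).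
Proof.
rewrite -[ecball x a]setCK; apply: measurableC; apply: sub_sigma_algebra.
have -> : ~` ecball x a = ~` ((fun y : 'rV[R]_d => enorm (y - x)) @^-1` [set z | z <= a]).
  by [].
apply: closed_openC; apply: preimage_closed; last exact: closed_le.
by move=> y _; exact: enormB_continuous.
Qed.

Lemma radially_down_closed_ball {x S b} :
  0 <= b -> radially_down_closed x S -> S `<=` ecball x b ->
  exists2 a, a <= b & S = eball x a \/ S = ecball x a.
Proof.
move=> b_ge0 Sdown Sb.
have [->|/set0P[y0 Sy0]] := eqVneq S set0.
  exists 0 => //; left; apply/seteqP; split=> // y.
  by rewrite /eball /= ltNge enorm_ge0.
pose I := [set enorm (y - x) | y in S].
have I0 : I !=set0 by exists (enorm (y0 - x)), y0.
have Ib : ubound I b by move=> _ [y Sy <-]; exact: Sb.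
have S_ecball : S `<=` ecball x (sup I).
  by move=> y Sy; apply: sup_upper_bound; [split; last exists b | exists y].
have eball_S : eball x (sup I) `<=` S.
  by move=> z /(sup_gt I0)[_ [y Sy <-] zy]; apply: Sdown Sy _; exact: ltW.
exists (sup I); first exact: ge_sup.
have [[y [Sy ya]]|not_attained] := pselect (exists y, S y /\ enorm (y - x) = sup I).
  by right; apply/seteqP; split=> // z zx; apply: Sdown Sy _; rewrite ya.
left; apply/seteqP; split=> // z Sz; rewrite /eball /= lt_neqAle S_ecball // andbT.
by apply/eqP => za; apply: not_attained; exists z.
Qed.

Lemma radially_down_closed_measurable {x S b} :
  0 <= b -> radially_down_closed x S -> S `<=` ecball x b -> measurable S.
Proof.
move=> b_ge0 Sdown Sb.
have [a _ [->|->]] := radially_down_closed_ball b_ge0 Sdown Sb.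
  exact: eball_measurable.
exact: ecball_measurable.
Qed.

End euclidean_balls.

Section rescaled_profile.
Context {R : realType} {d : nat} {phi : 'rV[R]_d -> R} {x : Rd R d} {r : R}.
Hypotheses (r_gt0 : 0 < r) (phi_ge0 : forall y, 0 <= phi y)
  (phi_decr : radially_decreasing phi) (phi_supp : supported_in_unit_ball phi).

Let g (y : Rd R d) := phi (r^-1 *: (y - x)).

Lemma rescaled_superlevel_down_closed t :
  radially_down_closed x [set y | t <= g y].
Proof.
move=> y z /= tg le; apply: le_trans tg _; apply: phi_decr.
by rewrite !enormZ ler_wpM2l.
Qed.

Lemma rescaled_superlevel_sub_ecball t :
  0 < t -> [set y | t <= g y] `<=` ecball x r.
Proof.
move=> t_gt0 y /= tg; rewrite /ecball /= leNgt; apply/negP => ry.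
suff : g y = 0 by move=> g0; move: t_gt0; rewrite ltNge -g0 tg.
apply: phi_supp; rewrite enormZ gtr0_norm ?invr_gt0 //.
by rewrite mulrC ltr_pdivlMr // mul1r.
Qed.

Lemma rescaled_profile_measurable : measurable_fun setT g.
Proof.
apply: measurable_fun_superlevel => t; have [t_le0|t_gt0] := leP t 0.
  rewrite (_ : [set y | t <= g y] = setT) //; apply/seteqP; split=> y // _.
  exact: le_trans t_le0 (phi_ge0 _).
apply: (radially_down_closed_measurable (ltW r_gt0)).
  exact: rescaled_superlevel_down_closed.
exact: rescaled_superlevel_sub_ecball.
Qed.

End rescaled_profile.

Section Pset_balls.
Context {R : realType} {d : nat} {nu : {charge set Rd R d -> \bar R}}
  {Ap An : set (Rd R d)} {nuPN : hahn_decomposition nu Ap An} {eps : R} {N : nat}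
  {x : Rd R d}.
Hypothesis xP : Pset nuPN eps N x.

Local Notation nu_pos := (jordan_pos nuPN).
Local Notation nu_neg := (jordan_neg nuPN).

Lemma Pset_ecball a : a < N%:R^-1 ->
  (nu_neg (ecball x a) <= eps%:E * nu_pos (ecball x a))%E.
Proof.
move=> aN; have [K aK] := ltr_add_invr aN.
pose F n := eball x (a + (n + K).+1%:R^-1).
have F_rad n : a + (n + K).+1%:R^-1 < N%:R^-1.
  by apply: le_lt_trans aK; rewrite lerD2l lef_pV2 ?posrE // ler_nat ltnS leq_addl.
have FE : \bigcap_n F n = ecball x a.
  apply/seteqP; split=> y; rewrite /F /eball /ecball /=; last first.
    by move=> ya n _; apply: le_lt_trans ya _; rewrite ltrDl.
  move=> yF; rewrite leNgt; apply/negP => /ltr_add_invr[k ak].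
  move: (yF k I); rewrite /= ltNge => /negP; apply; apply: le_trans (ltW ak).
  by rewrite lerD2l lef_pV2 ?posrE // ler_nat ltnS leq_addr.
have F_nonincr : nonincreasing_seq F.
  move=> n m nm; apply/subsetPset => y; rewrite /F /eball /= => yn.
  by apply: lt_le_trans yn _; rewrite lerD2l lef_pV2 ?posrE // ler_nat ltnS leq_add2r.
have mF n : measurable (F n) by exact: eball_measurable.
have cvg_pos : nu_pos \o F @ \oo --> nu_pos (ecball x a).
  rewrite -FE; apply: nonincreasing_cvg_mu => //; last by rewrite FE; exact: ecball_measurable.
  by rewrite ltey_eq fin_num_measure.
have cvg_eps_pos : (eps%:E * nu_pos (F n))%E @[n --> \oo] -->
    (eps%:E * nu_pos (ecball x a))%E by exact: cvgeZl.
rewrite -(cvg_lim _ cvg_eps_pos) //; apply: lime_ge.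
  by apply/cvg_ex; eexists; exact: cvg_eps_pos.
apply: nearW => n /=; apply: le_trans (xP.2 _ (F_rad n)).
apply: le_measure; rewrite ?inE; [exact: ecball_measurable | exact: mF |].
by rewrite -FE; exact: (bigcap_inf (P := setT) (F := F)).
Qed.

Lemma Pset_radially_down_closed {S b} :
  0 <= b -> b < N%:R^-1 -> radially_down_closed x S -> S `<=` ecball x b ->
  (nu_neg S <= eps%:E * nu_pos S)%E.
Proof.
move=> b_ge0 bN Sdown Sb.
have [a ab [->|->]] := radially_down_closed_ball b_ge0 Sdown Sb.
  exact: xP.2 (le_lt_trans ab bN).
exact: Pset_ecball (le_lt_trans ab bN).
Qed.

Lemma Pset_profile_integral {phi : 'rV[R]_d -> R} {r : R} :
  0 <= eps -> 0 < r -> r < N%:R^-1 -> (forall y, 0 <= phi y) ->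
  radially_decreasing phi -> supported_in_unit_ball phi ->
  (\int[nu_neg]_y (phi (r^-1 *: (y - x)))%:E
    <= eps%:E * \int[nu_pos]_y (phi (r^-1 *: (y - x)))%:E)%E.
Proof.
move=> eps_ge0 r_gt0 rN phi_ge0 phi_decr phi_supp.
have phi_le y : phi (r^-1 *: (y - x)) <= phi 0.
  by apply: phi_decr; rewrite enorm0 enorm_ge0.
have mg : measurable_fun setT (fun y : Rd R d => phi (r^-1 *: (y - x))).
  exact: rescaled_profile_measurable.
apply: (integral_le_of_superlevel_le mg (fun=> phi_ge0 _) phi_le eps_ge0) => t t_gt0.
apply: (Pset_radially_down_closed (ltW r_gt0) rN).
  exact: rescaled_superlevel_down_closed.
exact: rescaled_superlevel_sub_ecball.
Qed.

End Pset_balls.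

Lemma measurable_fun_rescale {R : realType} {d : nat} (f : Rd R d -> R) (x : Rd R d) (c : R) :
  measurable_fun setT f -> measurable_fun setT (fun y : Rd R d => f (c *: (y - x))).
Proof.
move=> mf; apply: measurableT_comp mf _.
apply: measurability; first by reflexivity.
move=> _ [B oB <-].
rewrite setTI; apply: sub_sigma_algebra; apply: open_comp oB => y _.
apply: (continuousZ (s := fun=> c) (f := fun w : 'rV[R]_d => w - x)).
  exact: cst_continuous.
apply: (continuousB (f := id) (g := fun=> x)); [exact: cvg_id | exact: cst_continuous].
Qed.

Theorem lemma13 (R : realType) (d : nat) (nu : {charge set Rd R d -> \bar R})
  (Ap An : set (Rd R d)) (nuPN : hahn_decomposition nu Ap An)
  (eps : R) (N : nat) (x : Rd R d) (r : R)
  (phi psi : 'rV[R]_d -> R) :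
  0 < eps -> (0 < N)%N ->
  Pset nuPN eps N x -> 0 < r -> r < N%:R^-1 ->
  radial phi -> (forall y, 0 <= phi y) -> supported_in_unit_ball phi ->
  radially_decreasing phi ->
  (forall y, phi y <= psi y) -> (forall y, psi y <= (2 * eps)^-1 * phi y) ->
  measurable_fun [set: Rd R d] (psi : Rd R d -> R) ->
  (* the integral of psi((y-x)/r) against nu is well defined *)
  ~ ((\int[jordan_pos nuPN]_y (psi (r^-1 *: (y - x)))%:E = +oo)%E /\
     (\int[jordan_neg nuPN]_y (psi (r^-1 *: (y - x)))%:E = +oo)%E) ->
  (\int[jordan_pos nuPN]_y (psi (r^-1 *: (y - x)))%:E
    <= 2%:E * signed_integral nuPN (fun y => (psi (r^-1 *: (y - x)))%:E))%E.
Proof.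
move=> eps_gt0 _ xP r_gt0 rN _ phi_ge0 phi_supp phi_decr phi_psi psi_phi mpsi _.
pose g (y : Rd R d) := phi (r^-1 *: (y - x)).
pose h (y : Rd R d) := psi (r^-1 *: (y - x)).
have g_ge0 y : 0 <= g y by exact: phi_ge0.
have g_le_h y : g y <= h y by exact: phi_psi.
have h_ge0 y : 0 <= h y by exact: le_trans (g_ge0 y) (g_le_h y).
have two_eps_gt0 : 0 < 2 * eps by rewrite mulr_gt0.
have h_le_g y : 2 * eps * h y <= g y by rewrite -ler_pdivlMl //; exact: psi_phi.
have mg : measurable_fun setT g by exact: rescaled_profile_measurable.
have mh : measurable_fun setT h by exact: measurable_fun_rescale.
have neg_le : ((2 * eps)%:E * \int[jordan_neg nuPN]_y (h y)%:E
    <= \int[jordan_neg nuPN]_y (g y)%:E)%E.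
  rewrite -ge0_integralZl //; last 3 first.
  - by apply/measurable_EFinP; exact: mh.
  - by move=> y _; rewrite lee_fin.
  - by rewrite lee_fin ltW.
  under eq_integral do rewrite -EFinM.
  apply: ge0_le_integral => //; last by move=> y _; rewrite lee_fin.
  - by move=> y _; rewrite lee_fin mulr_ge0 ?(ltW two_eps_gt0).
  - by apply/measurable_EFinP/measurable_funM.
  - exact/measurable_EFinP.
have pos_le : (\int[jordan_pos nuPN]_y (g y)%:E <= \int[jordan_pos nuPN]_y (h y)%:E)%E.
  apply: ge0_le_integral => //; last by move=> y _; rewrite lee_fin.
  - by move=> y _; rewrite lee_fin.
  - exact/measurable_EFinP.
  - exact/measurable_EFinP.
have g_cmp := Pset_profile_integral xP (ltW eps_gt0) r_gt0 rN phi_ge0 phi_decr phi_supp.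
have neg_fin : (\int[jordan_neg nuPN]_y (h y)%:E)%E \is a fin_num.
  apply: (bounded_integral_fin_num ((2 * eps)^-1 * phi 0) mh h_ge0) => y.
  apply: le_trans (psi_phi _) (ler_wpM2l _ (phi_decr _ _ _)).
  - by rewrite invr_ge0 ltW.
  - by rewrite enorm0 enorm_ge0.
rewrite /signed_integral; apply: lee_twice_sub neg_fin _.
rewrite -(@lee_pmul2l _ eps%:E) // muleA -EFinM mulrC.
by apply: le_trans neg_le (le_trans g_cmp _); rewrite lee_wpmul2l // lee_fin ltW.
Qed.
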